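(* Let $w:\{0,1\}^L\to\mathbb{R}_{\ge 0}$ be a generic fitness landscape displaying universal positive epistasis. Then $w$ induces the standard staircase triangulation of $[0,1]^L$.
   Context: Genotypes $g\in\{0,1\}^L$ are identified with subsets $\{i:g_i=1\}$ of $\mathcal{L}=\{1,\dots,L\}$ and with vertices of $[0,1]^L$. The landscape displays universal positive epistasis if for all $b'\subset b\subseteq\mathcal{L}$ and all $s\subseteq\mathcal{L}\setminus b$ one has $w_{b\cup s}-w_b\ge w_{b'\cup s}-w_{b'}$; equivalently $w_{g\cup g'}+w_{g\cap g'}\ge w_g+w_{g'}$ for all genotypes $g,g'$. The triangulation induced by $w$ is the regular subdivision of $[0,1]^L$ obtained by projecting the upper faces of $\mathrm{conv}\{(g,w_g)\}\subset\mathbb{R}^{L+1}$; $w$ is generic if all $w_g$ are distinct and this subdivision is a triangulation. The standard staircase triangulation consists of the $L!$ simplices $\{g_0\subset g_1\subset\cdots\subset g_L\}$ with $g_0=\emptyset$, $g_L=\mathcal{L}$, $|g_k|=k$. *)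

(* Genotypes g in {0,1}^L are finite sets {set 'I_L};
   the coordinate x_i of the vertex g of [0,1]^L is 1 if i \in g, else 0. *)
From HB Require Import structures.
From mathcomp Require Import all_boot all_order all_algebra.
Set Implicit Arguments. Unset Strict Implicit. Unset Printing Implicit Defensive.
Import Order.TTheory GRing.Theory Num.Theory.
Local Open Scope ring_scope.

Section Defs.
Variables (R : realFieldType) (L : nat).
Notation geno := {set 'I_L}.

(* value at the vertex g of the affine function x |-> c + sum_i a_i x_i *)
Definition affval (a : 'I_L -> R) (c : R) (g : geno) : R := c + \sum_(i in g) a i.

Definition universal_positive_epistasis (w : geno -> R) : Prop :=
  forall b' b s : geno, b' \proper b -> [disjoint s & b] ->
    w (b' :|: s) - w b' <= w (b :|: s) - w b.

(* S is (the vertex set of) a cell of the regular subdivision induced by w: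
   the projection of an upper face of conv{(g, w g)}, i.e. there is a
   non-vertical supporting hyperplane (graph of an affine function h)
   lying weakly above all lifted points and touching exactly the points of S. *)
Definition is_cell (w : geno -> R) (S : {set geno}) : Prop :=
  exists (a : 'I_L -> R) (c : R),
    (forall g, w g <= affval a c g) /\
    (forall g, (g \in S) <-> (affval a c g = w g)).

Definition affinely_independent (S : {set geno}) : Prop :=
  forall lam : geno -> R,
    (forall g, g \notin S -> lam g = 0) ->
    \sum_(g in S) lam g = 0 ->
    (forall i : 'I_L, \sum_(g in S | i \in g) lam g = 0) ->
    forall g, lam g = 0.

Definition affinely_spanning (S : {set geno}) : Prop :=
  forall (a : 'I_L -> R) (c : R),
    (forall g, g \in S -> affval a c g = 0) ->
    c = 0 /\ forall i, a i = 0.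

(* generic: distinct values and the induced subdivision is a triangulation
   (every cell is a simplex) *)
Definition generic (w : geno -> R) : Prop :=
  injective w /\ forall S, is_cell w S -> affinely_independent S.

Definition maximal_cell (w : geno -> R) (S : {set geno}) : Prop :=
  is_cell w S /\ affinely_spanning S.

Definition staircase_simplex (S : {set geno}) : Prop :=
  exists f : nat -> geno,
    (forall k, (k <= L)%N -> #|f k| = k) /\
    (forall k, (k < L)%N -> f k \subset f k.+1) /\
    S = [set f (val k) | k : 'I_L.+1].

Definition induces_staircase (w : geno -> R) : Prop :=
  forall S, maximal_cell w S <-> staircase_simplex S.

End Defs.

(* Affine functions are modular and a landscape with universal positive
   epistasis is supermodular, so the set of vertices where a supporting affine
   function touches [w] is closed under union and intersection.  If [g] and
   [g'] were incomparable, [g + g' = (g :|: g') + (g :&: g')] would be an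
   affine dependence, which a triangulation forbids; hence every cell is a
   chain, and a full-dimensional chain has [L + 1] elements, one of each size.
   Conversely, along a maximal chain the affine interpolant of [w] (its Lovász
   extension on that simplex) dominates [w] by supermodularity, and the set
   where it touches [w] is a simplex containing the [L + 1] affinely spanning
   vertices of the chain, so by counting it is exactly the chain. *)

From HB Require Import structures.
From mathcomp Require Import all_boot all_order all_algebra.
From mathcomp Require Import lra.
Set Implicit Arguments. Unset Strict Implicit. Unset Printing Implicit Defensive.
Import Order.TTheory GRing.Theory Num.Theory.
Local Open Scope ring_scope.

Lemma sum_pred_indicator (R : nzRingType) (T : finType) (P : pred T) (y : T) :
  \sum_(x | P x) ((x == y)%:R : R) = (P y)%:R.
Proof.
have [Py|nPy] := boolP (P y).
  by rewrite (bigD1 y) //= eqxx big1 ?addr0 // => x /andP[_ /negbTE ->].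
by rewrite big1 // => x Px; case: eqP => // Exy; rewrite -Exy Px in nPy.
Qed.

Lemma sum_mem_card (R : nzRingType) (T : finType) (A B : {set T}) :
  \sum_(x in A) ((x \in B)%:R : R) = #|A :&: B|%:R.
Proof.
rewrite -sum1_card natr_sum big_mkcond [RHS]big_mkcond.
by apply: eq_bigr => x _; rewrite in_setI; case: (x \in A); case: (x \in B).
Qed.

Section Genotypes.
Variables (R : realFieldType) (L : nat).
Notation geno := {set 'I_L}.

Definition supermodular (w : geno -> R) : Prop :=
  forall g g', w g + w g' <= w (g :|: g') + w (g :&: g').

Definition chain (S : {set geno}) : Prop :=
  {in S &, forall g g' : geno, (g \subset g') || (g' \subset g)}.

Lemma affval_setU1 (a : 'I_L -> R) c i (g : geno) :
  i \notin g -> affval a c (i |: g) = affval a c g + a i.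
Proof. by move=> gi; rewrite /affval big_setU1 //= addrCA addrC. Qed.

Lemma affval_modular (a : 'I_L -> R) c (g g' : geno) :
  affval a c (g :|: g') + affval a c (g :&: g') = affval a c g + affval a c g'.
Proof.
rewrite /affval (big_setID g) /= setUK [in RHS](big_setID (A := g') g) /=.
have -> : (g :|: g') :\: g = g' :\: g by rewrite setDUl setDv set0U.
rewrite setIC; lra.
Qed.

Lemma upe_supermodular (w : geno -> R) :
  universal_positive_epistasis w -> supermodular w.
Proof.
move=> upe g g'; have [sgg'|nsgg'] := boolP (g \subset g').
  by rewrite (setUidPr sgg') (setIidPl sgg') addrC.
have proper_gIg' : g :&: g' \proper g.
  rewrite properEneq subsetIl andbT.
  by apply: contra nsgg' => /eqP <-; apply: subsetIr.
have disj : [disjoint g' :\: g & g] by rewrite disjoints_subset setDE subsetIr.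
have := upe _ _ _ proper_gIg' disj.
rewrite [g :&: g']setIC setID setDE setUIr setUCr setIT; lra.
Qed.

Lemma cell_setU_setI (w : geno -> R) S : supermodular w -> is_cell w S ->
  {in S &, forall g g', g :|: g' \in S /\ g :&: g' \in S}.
Proof.
move=> supw [a [c [w_le touch]]] g g' /touch wg /touch wg'.
have := affval_modular a c g g'; have := supw g g'.
have := w_le (g :|: g'); have := w_le (g :&: g').
by split; apply/touch; lra.
Qed.

Lemma affinely_independent_lattice_chain (S : {set geno}) : affinely_independent R S ->
  {in S &, forall g g', g :|: g' \in S /\ g :&: g' \in S} -> chain S.
Proof.
move=> indepS latS g g' gS g'S; have [gUS gIS] := latS g g' gS g'S.
apply/negPn/negP; rewrite negb_or => /andP[ngg' ng'g].
pose lam h : R :=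
  (h == g)%:R + (h == g')%:R - (h == g :|: g')%:R - (h == g :&: g')%:R.
suff /eqP : lam g = 0.
  have gg' : (g == g') = false by apply: contraNF ngg' => /eqP ->.
  have gU : (g == g :|: g') = false.
    by apply: contraNF ng'g => /eqP {1}->; apply: subsetUr.
  have gI : (g == g :&: g') = false.
    by apply: contraNF ngg' => /eqP {1}->; apply: subsetIr.
  by rewrite /lam eqxx gg' gU gI !subr0 addr0 oner_eq0.
apply: indepS => [h hS||i].
- have out x : x \in S -> (h == x) = false by move=> xS; apply: contraNF hS => /eqP ->.
  by rewrite /lam !out // !subr0 addr0.
- by rewrite /lam !sumrB big_split /= !sum_pred_indicator gS g'S gUS gIS; lra.
- rewrite /lam !sumrB big_split /= !sum_pred_indicator gS g'S gUS gIS !inE.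
  by case: (i \in g); case: (i \in g') => /=; lra.
Qed.

(* Homogeneous coordinates: coordinate [0] is the constant [1], coordinate
   [lift ord0 i] is [x_i]. *)
Definition hcoord (g : geno) (k : 'I_L.+1) : R :=
  if unlift ord0 k is Some i then (i \in g)%:R else 1.

Lemma sum_hcoord (u : 'I_L.+1 -> R) g :
  \sum_k u k * hcoord g k = affval (fun i => u (lift ord0 i)) (u ord0) g.
Proof.
rewrite big_ord_recl /hcoord unlift_none mulr1 /affval; congr (_ + _).
rewrite [RHS]big_mkcond; apply: eq_bigr => i _.
by rewrite liftK; case: (i \in g); rewrite ?mulr1 ?mulr0.
Qed.

Definition vertex_mx (S : {set geno}) : 'M[R]_(#|S|, L.+1) :=
  \matrix_(j, k) hcoord (enum_val j) k.

Lemma affinely_spanning_card (S : {set geno}) : affinely_spanning R S -> (L < #|S|)%N.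
Proof.
move=> spanS; suff /eqP <- : row_free (vertex_mx S)^T by apply: rank_leq_col.
apply: inj_row_free => v v0.
have [c0 a0] : v 0 ord0 = 0 /\ forall i, v 0 (lift ord0 i) = 0.
  apply: spanS => g gS; rewrite -(enum_rankK_in gS gS) -sum_hcoord.
  have vg0 : (v *m (vertex_mx S)^T) 0 (enum_rank_in gS g) = 0 by rewrite v0 mxE.
  by rewrite -[RHS]vg0 mxE; apply: eq_bigr => k _; rewrite !mxE.
by apply/rowP => k; rewrite mxE; case: (unliftP ord0 k) => [i|] ->; [apply: a0|].
Qed.

Lemma affinely_independent_card (S : {set geno}) :
  affinely_independent R S -> (#|S| <= L.+1)%N.
Proof.
move=> indepS; suff /eqP <- : row_free (vertex_mx S) by apply: rank_leq_col.
apply: inj_row_free => v v0; apply/rowP => j; rewrite mxE.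
have jS := enum_valP j.
pose lam g := if g \in S then v 0 (enum_rank_in jS g) else 0.
have lam_enum j' : lam (enum_val j') = v 0 j' by rewrite /lam enum_valP enum_valK_in.
have lam_hcoord k : \sum_(g in S) lam g * hcoord g k = 0.
  have vk0 : (v *m vertex_mx S) 0 k = 0 by rewrite v0 mxE.
  rewrite -[RHS]vk0 mxE big_enum_val; apply: eq_bigr => j' _.
  by rewrite lam_enum mxE.
rewrite -lam_enum; apply: indepS => [g gS||i].
- by rewrite /lam (negbTE gS).
- rewrite -[RHS](lam_hcoord ord0); apply: eq_bigr => g _.
  by rewrite /hcoord unlift_none mulr1.
- rewrite big_mkcondr -[RHS](lam_hcoord (lift ord0 i)); apply: eq_bigr => g _.
  by rewrite /hcoord liftK; case: (i \in g); rewrite ?mulr1 ?mulr0.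
Qed.

Lemma chain_subset_card (S : {set geno}) : chain S ->
  {in S &, forall g g' : geno, (#|g| <= #|g'|)%N -> g \subset g'}.
Proof.
move=> chS g g' gS g'S le_gg'; case/orP: (chS g g' gS g'S) => // sg'g.
by have /eqP -> : g' == g by rewrite eqEcard sg'g le_gg'.
Qed.

Lemma chain_card_inj (S : {set geno}) : chain S ->
  {in S &, injective (fun g : geno => #|g|)}.
Proof.
move=> chS g g' gS g'S eq_card; apply/eqP.
by rewrite eqEcard (chain_subset_card chS) ?eq_card ?leqnn.
Qed.

Lemma chain_staircase (S : {set geno}) :
  chain S -> (L < #|S|)%N -> staircase_simplex S.
Proof.
move=> chS ltLS.
have card_le (g : geno) : (#|g| <= L)%N by have := max_card (mem g); rewrite card_ord.
pose size_ord (g : geno) : 'I_L.+1 := inord #|g|.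
have size_ordK g : val (size_ord g) = #|g| by apply: inordK; rewrite ltnS.
have size_onto : size_ord @: S = setT.
  apply/eqP; rewrite eqEcard subsetT cardsT card_ord card_in_imset //.
  by move=> g g' gS g'S /(congr1 val); rewrite !size_ordK; apply: (chain_card_inj chS).
pose f k := odflt set0 [pick g in S | #|g| == k].
have f_spec k : (k <= L)%N -> f k \in S /\ #|f k| = k.
  move=> kL; rewrite /f; case: pickP => [g /andP[gS /eqP] //|none].
  have : inord k \in size_ord @: S by rewrite size_onto inE.
  case/imsetP => g gS /(congr1 val); rewrite size_ordK /= inordK // => gk.
  by move: (none g); rewrite gS gk eqxx.
exists f; split; [|split].
- by move=> k /f_spec[].
- move=> k kL; have [fkS fk] := f_spec k (ltnW kL).
  have [fk1S fk1] := f_spec k.+1 kL.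
  by apply: (chain_subset_card chS); rewrite // fk fk1.
- apply/setP => g; apply/idP/imsetP => [gS|[k _ ->]].
    have [fS fc] := f_spec #|g| (card_le g).
    by exists (size_ord g) => //; rewrite size_ordK; apply: (chain_card_inj chS).
  by have [] := f_spec k (ltn_ord k).
Qed.

Section Staircase.
Variable f : nat -> geno.
Hypothesis f_card : forall k, (k <= L)%N -> #|f k| = k.
Hypothesis f_sub : forall k, (k < L)%N -> f k \subset f k.+1.

Definition stair_set : {set geno} := [set f (val k) | k : 'I_L.+1].

Lemma mem_stair g : g \in stair_set <-> exists2 j, (j <= L)%N & g = f j.
Proof.
split=> [/imsetP[k _ ->]|[j jL ->]].
  by exists k => //; rewrite -ltnS; apply: ltn_ord.
by apply/imsetP; exists (inord j); rewrite //= inordK.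
Qed.

Lemma stair_mono j k : (j <= k)%N -> (k <= L)%N -> f j \subset f k.
Proof.
elim: k => [|k IHk]; first by rewrite leqn0 => /eqP ->.
rewrite leq_eqVlt => /predU1P[-> //|jk kL].
exact: subset_trans (IHk jk (ltnW kL)) (f_sub kL).
Qed.

Lemma stair0 : f 0 = set0.
Proof. exact/cards0_eq/f_card. Qed.

Lemma stairL : f L = setT.
Proof. by apply/eqP; rewrite eqEcard subsetT cardsT card_ord f_card ?leqnn. Qed.

Lemma stair_step k : (k < L)%N -> exists2 i, i \notin f k & f k.+1 = i |: f k.
Proof.
move=> kL; have /cards1P[i Ei] : #|f k.+1 :\: f k| == 1%N.
  by rewrite cardsD (setIidPr (f_sub kL)) !f_card ?subSnn // ltnW.
exists i; last by rewrite -Ei setUC setDE setUIr setUCr setIT (setUidPr (f_sub kL)).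
have : i \in f k.+1 :\: f k by rewrite Ei set11.
by rewrite inE => /andP[].
Qed.

Lemma stair_spanning : affinely_spanning R stair_set.
Proof.
move=> a c vanish.
have vanish_f j : (j <= L)%N -> affval a c (f j) = 0.
  by move=> jL; apply: vanish; apply/mem_stair; exists j.
have c0 : c = 0 by have := vanish_f 0%N isT; rewrite stair0 /affval big_set0 addr0.
have a0 k : (k <= L)%N -> {in f k, forall i, a i = 0}.
  elim: k => [_ i|k IHk kL i]; first by rewrite stair0 inE.
  have [i0 i0f fk1] := stair_step kL.
  have := vanish_f _ kL; rewrite fk1 affval_setU1 // vanish_f ?(ltnW kL) // add0r.
  by move=> ai0 /setU1P[-> //|]; apply: IHk (ltnW kL) i.
by split=> // i; apply: (a0 L (leqnn L)); rewrite stairL inE.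
Qed.

Variable w : geno -> R.

(* [a_i = w (f k.+1) - w (f k)] for the step [k] at which [i] enters the chain. *)
Definition stair_coef (i : 'I_L) : R :=
  \sum_(0 <= k < L) (w (f k.+1) - w (f k)) * ((i \in f k.+1)%:R - (i \in f k)%:R).

Lemma stair_affvalE g : affval stair_coef (w set0) g =
  w set0 + \sum_(0 <= k < L)
             (w (f k.+1) - w (f k)) * (#|g :&: f k.+1|%:R - #|g :&: f k|%:R).
Proof.
rewrite /affval /stair_coef exchange_big /=; congr (_ + _).
by apply: eq_bigr => k _; rewrite -mulr_sumr sumrB !sum_mem_card.
Qed.

Lemma stair_telescope g :
  w g = w set0 + \sum_(0 <= k < L) (w (g :&: f k.+1) - w (g :&: f k)).
Proof. by rewrite telescope_sumr // stairL stair0 setIT setI0 addrC subrK. Qed.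

Lemma stair_increment_le g k : supermodular w -> (k < L)%N ->
  w (g :&: f k.+1) - w (g :&: f k) <=
  (w (f k.+1) - w (f k)) * (#|g :&: f k.+1|%:R - #|g :&: f k|%:R).
Proof.
move=> supw kL; have [i ifk fk1] := stair_step kL; rewrite fk1.
have [ig|ig] := boolP (i \in g); last first.
  have -> : g :&: (i |: f k) = g :&: f k.
    by apply/setP => j; rewrite !inE; case: eqVneq => // ->; rewrite (negbTE ig).
  by rewrite !subrr mulr0.
have gIfk1 : g :&: (i |: f k) = i |: (g :&: f k).
  by apply/setP => j; rewrite !inE; case: eqVneq => // ->; rewrite ig.
have := supw (f k) (i |: (g :&: f k)).
have -> : f k :|: (i |: (g :&: f k)) = i |: f k.
  apply/setP => j; rewrite !inE.
  by case: (j \in f k); case: (j == i); case: (j \in g).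
have -> : f k :&: (i |: (g :&: f k)) = g :&: f k.
  apply/setP => j; rewrite !inE; case: eqVneq => [->|_].
    by rewrite (negbTE ifk) andbF.
  by case: (j \in f k); case: (j \in g).
rewrite gIfk1 cardsU1 in_setI (negbTE ifk) andbF natrD addrK mulr1; lra.
Qed.

Lemma stair_increment_chain j k : (j <= L)%N -> (k < L)%N ->
  w (f j :&: f k.+1) - w (f j :&: f k) =
  (w (f k.+1) - w (f k)) * (#|f j :&: f k.+1|%:R - #|f j :&: f k|%:R).
Proof.
move=> jL kL; have [jk|kj] := leqP j k.
  by rewrite !(setIidPl (stair_mono _ _)) ?subrr ?mulr0 // ltnW.
rewrite !(setIidPr (stair_mono _ _)) ?f_card ?(ltnW kL) // ?(ltnW kj) //.
by rewrite -natrB // subSnn mulr1.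
Qed.

Lemma stair_affval_ge g : supermodular w -> w g <= affval stair_coef (w set0) g.
Proof.
move=> supw; rewrite stair_affvalE {1}(stair_telescope g) lerD2l.
by apply: ler_sum_nat => k /andP[_ kL]; apply: stair_increment_le.
Qed.

Lemma stair_affval_chain j : (j <= L)%N -> affval stair_coef (w set0) (f j) = w (f j).
Proof.
move=> jL; rewrite stair_affvalE [RHS]stair_telescope; congr (_ + _).
by apply: eq_big_nat => k /andP[_ kL]; rewrite stair_increment_chain.
Qed.

Lemma stair_cell : supermodular w ->
  (forall S, is_cell w S -> affinely_independent R S) -> is_cell w stair_set.
Proof.
move=> supw cells_indep.
pose T := [set g | affval stair_coef (w set0) g == w g].
have cellT : is_cell w T.
  exists stair_coef, (w set0); split=> [g|g]; first exact: stair_affval_ge.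
  by rewrite inE; split=> /eqP.
suff -> : stair_set = T by [].
apply/eqP; rewrite eqEcard; apply/andP; split.
  by apply/subsetP => g /mem_stair[j jL ->]; rewrite inE stair_affval_chain.
exact: leq_trans (affinely_independent_card (cells_indep _ cellT))
                 (affinely_spanning_card stair_spanning).
Qed.

End Staircase.

Lemma maximal_cell_staircase (w : geno -> R) S : supermodular w ->
  (forall S, is_cell w S -> affinely_independent R S) ->
  maximal_cell w S -> staircase_simplex S.
Proof.
move=> supw cells_indep [cellS spanS].
apply: chain_staircase (affinely_spanning_card spanS).
exact: affinely_independent_lattice_chain (cells_indep _ cellS)
                                          (cell_setU_setI supw cellS).
Qed.

Lemma staircase_maximal_cell (w : geno -> R) S : supermodular w ->
  (forall S, is_cell w S -> affinely_independent R S) ->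
  staircase_simplex S -> maximal_cell w S.
Proof.
move=> supw cells_indep [f [f_card [f_sub ->]]].
by split; [apply: stair_cell | apply: stair_spanning].
Qed.

End Genotypes.

Theorem mainTheorem11 (R : realFieldType) (L : nat) (w : {set 'I_L} -> R) :
  (forall g, 0 <= w g) ->
  generic w ->
  universal_positive_epistasis w ->
  induces_staircase w.
Proof.
move=> _ [_ cells_indep] /upe_supermodular supw S; split.
- exact: maximal_cell_staircase.
- exact: staircase_maximal_cell.
Qed.
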